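(* Let $d\ge 2$ and $N\ge 1$ be integers and consider the infinite-temperature limit $\beta=0$, so that the thermal distribution of the system is uniform and the joint thermal distribution $\Gamma$ of system and memory is uniform on $\{1,\dots,dN\}$. Let $\mathbf p=(p_1,\dots,p_d)$ be a probability vector, let $i\neq j$ be two levels of the system, and let $\mathcal P^{(ij)}$ be the memory-assisted protocol defined in the context. Then $$\mathcal P^{(ij)}(\mathbf p\otimes\boldsymbol\eta_M)=\mathbf q\otimes\boldsymbol\eta_M,\qquad \mathbf q=\big(\Pi_{ij}+\epsilon(\mathbb 1-\Pi_{ij})\big)\mathbf p,$$ where $\Pi_{ij}$ is the $d\times d$ permutation matrix transposing entries $i$ and $j$, $\mathbb 1$ is the identity, and $\epsilon$ (which depends only on $N$) satisfies $$\epsilon=(\pi N)^{-1/2}+o\big(N^{-1/2}\big)\xrightarrow{N\to\infty}0 .$$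
   Context: Setting: a $d$-level system with energies $E_1,\dots,E_d$ and thermal (Gibbs) distribution $\gamma_a=e^{-\beta E_a}/\sum_b e^{-\beta E_b}$; an $N$-dimensional memory with trivial Hamiltonian, whose thermal state is the uniform distribution $\boldsymbol\eta_M=(1/N,\dots,1/N)$. Joint (energy-incoherent) states are probability vectors $\mathbf Q$ of length $dN$, where the entry with index $(a-1)N+k$ corresponds to system level $a\in\{1,\dots,d\}$ and memory level $k\in\{1,\dots,N\}$; $\mathbf p\otimes\boldsymbol\eta_M$ has entries $p_a/N$ and the joint thermal distribution is $\Gamma=\boldsymbol\gamma\otimes\boldsymbol\eta_M$, i.e. $\Gamma_{(a-1)N+k}=\gamma_a/N$. Two-level thermalisation $T_{xy}$ ($x\neq y$ joint indices): it maps $Q_x\mapsto (Q_x+Q_y)\Gamma_x/(\Gamma_x+\Gamma_y)$, $Q_y\mapsto (Q_x+Q_y)\Gamma_y/(\Gamma_x+\Gamma_y)$ and leaves all other entries unchanged. Round $\mathcal R^{(ij)}_k$ ($k=1,\dots,N$): apply sequentially, for $l=1,2,\dots,N$ in this order, the thermalisations $T_{(j-1)N+k,\,(i-1)N+l}$ (i.e. the $k$-th entry of the block of level $j$ is thermalised successively with every entry of the block of level $i$). Truncated protocol: $\widetilde{\mathcal P}^{(ij)}=\mathcal R^{(ij)}_N\circ\cdots\circ\mathcal R^{(ij)}_1$. Full thermalisation of the memory: $\mathcal T(\mathbf Q)=\mathbf q\otimes\boldsymbol\eta_M$ with $q_a=\sum_{k=1}^N Q_{(a-1)N+k}$. Protocol: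 $\mathcal P^{(ij)}=\mathcal T\circ\widetilde{\mathcal P}^{(ij)}$. *)

(* Distributions are functions nat -> R,
   only the entries with index < length are meaningful; indices are 0-based:
   system level a in {0..d-1}, memory level k in {0..N-1},
   joint index a*N + k  (paper: (a-1)N+k with 1-based a,k). *)
From Stdlib Require Import Reals Lra Lia List.
Open Scope R_scope.

Fixpoint rsum (n : nat) (f : nat -> R) : R :=
  match n with
  | O => 0
  | S m => rsum m f + f m
  end.

Definition gibbs (beta : R) (E : nat -> R) (d : nat) (a : nat) : R :=
  exp (- beta * E a) / rsum d (fun b => exp (- beta * E b)).

Definition Gamma (beta : R) (E : nat -> R) (d N : nat) (z : nat) : R :=
  gibbs beta E d (Nat.div z N) / INR N.

Definition tensor_eta (N : nat) (p : nat -> R) (z : nat) : R :=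
  p (Nat.div z N) / INR N.

Definition therm2 (G : nat -> R) (x y : nat) (Q : nat -> R) : nat -> R :=
  fun z =>
    if Nat.eqb z x then (Q x + Q y) * G x / (G x + G y)
    else if Nat.eqb z y then (Q x + Q y) * G y / (G x + G y)
    else Q z.

Definition round (G : nat -> R) (N i j k : nat) (Q : nat -> R) : nat -> R :=
  fold_left (fun Q' l => therm2 G (j * N + k)%nat (i * N + l)%nat Q') (seq 0 N) Q.

Definition trunc_protocol (G : nat -> R) (N i j : nat) (Q : nat -> R) : nat -> R :=
  fold_left (fun Q' k => round G N i j k Q') (seq 0 N) Q.

Definition therm_memory (N : nat) (Q : nat -> R) : nat -> R :=
  tensor_eta N (fun a => rsum N (fun k => Q (a * N + k)%nat)).

Definition protocol (beta : R) (E : nat -> R) (d N i j : nat) (Q : nat -> R) : nat -> R :=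
  therm_memory N (trunc_protocol (Gamma beta E d N) N i j Q).

Definition swap (i j a : nat) : nat :=
  if Nat.eqb a i then j else if Nat.eqb a j then i else a.

Definition Pi_mx (i j a b : nat) : R := if Nat.eqb b (swap i j a) then 1 else 0.
Definition id_mx (a b : nat) : R := if Nat.eqb a b then 1 else 0.

Definition qvec (d i j : nat) (eps : R) (p : nat -> R) (a : nat) : R :=
  rsum d (fun b => (Pi_mx i j a b + eps * (id_mx a b - Pi_mx i j a b)) * p b).

Definition prob_vec (d : nat) (p : nat -> R) : Prop :=
  (forall a, (a < d)%nat -> 0 <= p a) /\ rsum d p = 1.

From Stdlib Require Import Reals Lra Lia List Factorial.
From Coquelicot Require Import Coquelicot.
Open Scope R_scope.

(* At beta = 0 a two-level thermalisation just averages two entries, so inside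
   the blocks of levels i and j every entry stays of the form
   (p_i + (p_j - p_i) h) / N.  The weights h obey the averaging recursion of
   Pascal's problem of points, and summing them over a block gives
   eps_N = C(2N, N) / 4^N.  The Wallis integrals of sin^n squeeze pi N eps_N^2
   between 2N / (2N + 1) and 1, whence eps_N ~ (pi N)^(-1/2). *)

Lemma rsum_S n f : rsum (S n) f = rsum n f + f n.
Proof. reflexivity. Qed.

Lemma rsum_ext n f g : (forall m, (m < n)%nat -> f m = g m) -> rsum n f = rsum n g.
Proof.
  induction n as [|n IH]; intros Hfg; simpl; [reflexivity|].
  rewrite IH, Hfg; auto.
Qed.

Lemma rsum_add n f g : rsum n (fun m => f m + g m) = rsum n f + rsum n g.
Proof. induction n as [|n IH]; simpl; [ring|rewrite IH; ring]. Qed.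

Lemma rsum_sub n f g : rsum n (fun m => f m - g m) = rsum n f - rsum n g.
Proof. induction n as [|n IH]; simpl; [ring|rewrite IH; ring]. Qed.

Lemma rsum_scal n c f : rsum n (fun m => c * f m) = c * rsum n f.
Proof. induction n as [|n IH]; simpl; [ring|rewrite IH; ring]. Qed.

Lemma rsum_const n c : rsum n (fun _ => c) = INR n * c.
Proof. induction n as [|n IH]; simpl rsum; [simpl; ring|rewrite IH, S_INR; ring]. Qed.

Lemma rsum_indicator n c f : (c < n)%nat ->
  rsum n (fun b => (if Nat.eqb b c then 1 else 0) * f b) = f c.
Proof.
  induction n as [|n IH]; intros Hc; [lia|].
  rewrite rsum_S. destruct (Nat.eqb_spec n c) as [->|Hnc].
  - rewrite (rsum_ext c _ (fun _ => 0)), rsum_const; [ring|].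
    intros m Hm. destruct (Nat.eqb_spec m c); [lia|ring].
  - rewrite IH by lia. ring.
Qed.

Definition fair_binom (a b : nat) : R :=
  INR (fact (a + b)) / (INR (fact a) * INR (fact b) * 2 ^ (a + b)).

Lemma INR_fact_pos n : 0 < INR (fact n).
Proof. apply lt_0_INR, lt_O_fact. Qed.

Lemma fair_binom_pos a b : 0 < fair_binom a b.
Proof.
  pose proof (INR_fact_pos (a + b)). pose proof (INR_fact_pos a). pose proof (INR_fact_pos b).
  pose proof (pow_lt 2 (a + b) ltac:(lra)).
  unfold fair_binom. apply Rdiv_lt_0_compat; [lra|].
  repeat apply Rmult_lt_0_compat; lra.
Qed.

Lemma fair_binom_sym a b : fair_binom a b = fair_binom b a.
Proof. unfold fair_binom. rewrite Nat.add_comm. f_equal. ring. Qed.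

Lemma fair_binom_0_0 : fair_binom 0 0 = 1.
Proof. unfold fair_binom. simpl. field. Qed.

Lemma fair_binom_S_0 a : fair_binom (S a) 0 = fair_binom a 0 / 2.
Proof.
  unfold fair_binom. rewrite !Nat.add_0_r, fact_simpl, mult_INR, S_INR. simpl pow.
  pose proof (INR_fact_pos a). pose proof (INR_fact_pos 0).
  pose proof (pow_lt 2 a ltac:(lra)). pose proof (pos_INR a).
  field. repeat split; lra.
Qed.

Lemma fair_binom_0_S b : fair_binom 0 (S b) = fair_binom 0 b / 2.
Proof. rewrite fair_binom_sym, fair_binom_S_0, fair_binom_sym. reflexivity. Qed.

Lemma fair_binom_S_S a b :
  fair_binom (S a) (S b) = (fair_binom a (S b) + fair_binom (S a) b) / 2.
Proof.
  unfold fair_binom.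
  replace (S a + S b)%nat with (S (S (a + b))) by lia.
  replace (a + S b)%nat with (S (a + b)) by lia.
  replace (S a + b)%nat with (S (a + b)) by lia.
  rewrite !fact_simpl, !mult_INR, !S_INR, plus_INR. simpl pow.
  pose proof (INR_fact_pos a). pose proof (INR_fact_pos b). pose proof (INR_fact_pos (a + b)).
  pose proof (pow_lt 2 (a + b) ltac:(lra)). pose proof (pos_INR a). pose proof (pos_INR b).
  field. repeat split; lra.
Qed.

Lemma fair_binom_diag_S n :
  fair_binom (S n) (S n) = fair_binom n n * (2 * INR n + 1) / (2 * INR n + 2).
Proof.
  unfold fair_binom.
  replace (S n + S n)%nat with (S (S (n + n))) by lia.
  rewrite !fact_simpl, !mult_INR, !S_INR, plus_INR. simpl pow.
  pose proof (INR_fact_pos n). pose proof (INR_fact_pos (n + n)).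
  pose proof (pow_lt 2 (n + n) ltac:(lra)). pose proof (pos_INR n).
  field. repeat split; lra.
Qed.

(* [race k l] is the probability that [l] heads come before [k] tails in fair
   coin tosses (Pascal's problem of points), with [race 0 0 = 0]. *)
Fixpoint race (k : nat) : nat -> R :=
  match k with
  | O => fun _ => 0
  | S k' => fix race_S (l : nat) : R :=
      match l with
      | O => 1
      | S l' => (race k' (S l') + race_S l') / 2
      end
  end.

Lemma race_0_l l : race 0 l = 0. Proof. reflexivity. Qed.
Lemma race_S_0 k : race (S k) 0 = 1. Proof. reflexivity. Qed.
Lemma race_S_S k l : race (S k) (S l) = (race k (S l) + race (S k) l) / 2.
Proof. reflexivity. Qed.

Lemma race_sym k l : (0 < k + l)%nat -> race k l + race l k = 1.
Proof.
  remember (k + l)%nat as n eqn:En. revert k l En.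
  induction n as [|n IH]; intros k l En Hn; [lia|].
  destruct k as [|k], l as [|l]; try lia.
  - rewrite race_0_l, race_S_0. ring.
  - rewrite race_0_l, race_S_0. ring.
  - rewrite !race_S_S.
    assert (race k (S l) + race (S l) k = 1) by (apply IH; lia).
    assert (race (S k) l + race l (S k) = 1) by (apply IH; lia).
    lra.
Qed.

Lemma race_diag_S n : race (S n) (S n) = 1 / 2.
Proof. pose proof (race_sym (S n) (S n) ltac:(lia)). lra. Qed.

Lemma race_1_l l : race 1 l = fair_binom 0 l.
Proof.
  induction l as [|l IH]; [rewrite fair_binom_0_0; reflexivity|].
  rewrite race_S_S, race_0_l, IH, fair_binom_0_S. lra.
Qed.

Lemma race_S_sub k l : race (S k) l - race (S k) (S l) = fair_binom k l / 2.
Proof.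
  revert l. induction k as [|k IHk]; intros l.
  - rewrite !race_1_l, fair_binom_0_S. lra.
  - induction l as [|l IHl].
    + rewrite race_S_S, race_S_0, fair_binom_S_0.
      specialize (IHk 0%nat). rewrite race_S_0 in IHk. lra.
    + pose proof (race_S_S (S k) l). pose proof (IHk (S l)).
      rewrite (race_S_S (S k) (S l)), fair_binom_S_S. lra.
Qed.

Lemma rsum_half_fair_binom k L : rsum L (fun l => fair_binom k l / 2) = 1 - race (S k) L.
Proof.
  induction L as [|L IH]; simpl rsum; [rewrite race_S_0; ring|].
  rewrite IH. pose proof (race_S_sub k L). lra.
Qed.

Lemma rsum_fair_binom_col N : rsum N (fun m => fair_binom m N) = 1 - fair_binom N N.
Proof.
  rewrite (rsum_ext N _ (fun m => 2 * (fair_binom N m / 2))).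
  2:{ intros m _. rewrite fair_binom_sym. field. }
  rewrite rsum_scal, rsum_half_fair_binom.
  pose proof (race_S_sub N N). rewrite race_diag_S in *. lra.
Qed.

Lemma rsum_race_col N : rsum N (fun m => race (S m) N) = INR N * fair_binom N N.
Proof.
  induction N as [|N IH]; [simpl; ring|].
  rewrite rsum_S, race_diag_S.
  rewrite (rsum_ext N _ (fun m => race (S m) N - / 2 * fair_binom m N)).
  2:{ intros m _. pose proof (race_S_sub m N). lra. }
  rewrite rsum_sub, rsum_scal, IH, rsum_fair_binom_col, fair_binom_diag_S, S_INR.
  pose proof (pos_INR N). field. lra.
Qed.

Lemma rsum_race_row N : rsum N (fun l => race N (S l)) = INR N - INR N * fair_binom N N.
Proof.
  rewrite (rsum_ext N _ (fun l => 1 - race (S l) N)).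
  2:{ intros l _. pose proof (race_sym N (S l) ltac:(lia)). lra. }
  rewrite rsum_sub, rsum_race_col, rsum_const. ring.
Qed.

Lemma block_div_mod N a r : (r < N)%nat -> ((a * N + r) / N = a /\ (a * N + r) mod N = r)%nat.
Proof.
  intros Hr. split.
  - symmetry. apply (Nat.div_unique _ _ _ r); lia.
  - symmetry. apply (Nat.mod_unique _ _ a); lia.
Qed.

Lemma block_ind N (P : nat -> Prop) : (0 < N)%nat ->
  (forall a r, (r < N)%nat -> P (a * N + r)%nat) -> forall z, P z.
Proof.
  intros HN HP z. rewrite (Nat.div_mod_eq z N), Nat.mul_comm.
  apply HP, Nat.mod_upper_bound. lia.
Qed.

Lemma block_eqb N a r b s : (r < N)%nat -> (s < N)%nat ->
  Nat.eqb (a * N + r) (b * N + s) = andb (Nat.eqb a b) (Nat.eqb r s).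
Proof.
  intros Hr Hs.
  destruct (Nat.eqb_spec (a * N + r) (b * N + s)) as [E|E].
  - destruct (block_div_mod N a r Hr) as [Ha Hr'], (block_div_mod N b s Hs) as [Hb Hs'].
    rewrite E in Ha, Hr'. rewrite Ha in Hb. rewrite Hr' in Hs'. subst b s.
    rewrite !Nat.eqb_refl. reflexivity.
  - destruct (Nat.eqb_spec a b), (Nat.eqb_spec r s); subst; auto.
Qed.

Lemma tensor_eta_block N f a r : (r < N)%nat -> tensor_eta N f (a * N + r) = f a / INR N.
Proof. intros Hr. unfold tensor_eta. destruct (block_div_mod N a r Hr) as [-> _]. reflexivity. Qed.

Lemma fold_left_seq_ind {A} (f : A -> nat -> A) (P : nat -> A -> Prop) n x :
  P 0%nat x -> (forall m y, (m < n)%nat -> P m y -> P (S m) (f y m)) ->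
  P n (fold_left f (seq 0 n) x).
Proof.
  intros H0 HS.
  assert (G : forall m s y, (s + m = n)%nat -> P s y -> P n (fold_left f (seq s m) y)).
  { induction m as [|m IH]; intros s y Hs Hy; simpl.
    - replace n with s by lia. exact Hy.
    - apply IH; [lia|]. apply HS; [lia|exact Hy]. }
  apply G; auto.
Qed.

Lemma therm2_uniform G c x y Q z : (forall w, G w = c) -> c <> 0 ->
  therm2 G x y Q z =
  if Nat.eqb z x then (Q x + Q y) / 2 else if Nat.eqb z y then (Q x + Q y) / 2 else Q z.
Proof.
  intros HG Hc. unfold therm2. rewrite !HG.
  destruct (Nat.eqb z x); [field; lra|].
  destruct (Nat.eqb z y); [field; lra|reflexivity].
Qed.

Definition blend (N : nat) (p : nat -> R) (i j : nat) (h : R) : R :=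
  (p i + (p j - p i) * h) / INR N.

(* After being thermalised with [m] entries of the other block, entry [(i, r)]
   carries the weight [race m (S r)] of [p j] and entry [(j, r)] the weight
   [race (S r) m].  After [k] rounds and [L] steps of round [k], entry [(i, r)]
   has met [S k] entries if [r < L] and [k] otherwise, and entry [(j, r)] has
   met [N], [L] or [0] entries according as [r < k], [r = k] or [r > k]. *)
Definition mix_state (N : nat) (p : nat -> R) (i j k L z : nat) : R :=
  let a := (z / N)%nat in
  let r := (z mod N)%nat in
  if Nat.eqb a i then blend N p i j (race (if Nat.ltb r L then S k else k) (S r))
  else if Nat.eqb a j then
    blend N p i j (race (S r) (if Nat.ltb r k then N else if Nat.eqb r k then L else 0))
  else p a / INR N.

Lemma mix_state_block N p i j k L a r : (r < N)%nat ->
  mix_state N p i j k L (a * N + r) =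
  if Nat.eqb a i then blend N p i j (race (if Nat.ltb r L then S k else k) (S r))
  else if Nat.eqb a j then
    blend N p i j (race (S r) (if Nat.ltb r k then N else if Nat.eqb r k then L else 0))
  else p a / INR N.
Proof. intros Hr. unfold mix_state. destruct (block_div_mod N a r Hr) as [-> ->]. reflexivity. Qed.

Lemma mix_state_init N p i j z : (0 < N)%nat -> mix_state N p i j 0 0 z = tensor_eta N p z.
Proof.
  intros HN. revert z. apply (block_ind N); auto. intros a r Hr.
  rewrite mix_state_block, tensor_eta_block by exact Hr.
  destruct (Nat.eqb_spec a i) as [->|_].
  - unfold blend. rewrite race_0_l. f_equal. ring.
  - destruct (Nat.eqb_spec a j) as [->|_]; [|reflexivity].
    replace (race (S r) _) with 1 by (destruct r; reflexivity).
    unfold blend. f_equal. ring.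
Qed.

Lemma mix_state_round N p i j k z : (0 < N)%nat ->
  mix_state N p i j k N z = mix_state N p i j (S k) 0 z.
Proof.
  intros HN. revert z. apply (block_ind N); auto. intros a r Hr.
  rewrite !mix_state_block by exact Hr.
  destruct (Nat.eqb a i).
  - destruct (Nat.ltb_spec r N), (Nat.ltb_spec r 0); try lia. reflexivity.
  - destruct (Nat.eqb a j); [|reflexivity].
    destruct (Nat.ltb_spec r k), (Nat.ltb_spec r (S k)), (Nat.eqb_spec r k),
      (Nat.eqb_spec r (S k)); try lia; reflexivity.
Qed.

Lemma mix_state_step N p i j G c k L Q : i <> j -> (forall w, G w = c) -> c <> 0 ->
  (k < N)%nat -> (L < N)%nat -> (forall z, Q z = mix_state N p i j k L z) ->
  forall z, therm2 G (j * N + k) (i * N + L) Q z = mix_state N p i j k (S L) z.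
Proof.
  intros Hij HG Hc Hk HL HQ.
  assert (Hjk : Q (j * N + k)%nat = blend N p i j (race (S k) L)).
  { rewrite HQ, mix_state_block by exact Hk.
    destruct (Nat.eqb_spec j i); [congruence|]. rewrite Nat.eqb_refl.
    destruct (Nat.ltb_spec k k); [lia|]. rewrite Nat.eqb_refl. reflexivity. }
  assert (HiL : Q (i * N + L)%nat = blend N p i j (race k (S L))).
  { rewrite HQ, mix_state_block by exact HL. rewrite Nat.eqb_refl.
    destruct (Nat.ltb_spec L L); [lia|reflexivity]. }
  assert (Havg : (Q (j * N + k)%nat + Q (i * N + L)%nat) / 2 = blend N p i j (race (S k) (S L))).
  { rewrite Hjk, HiL, race_S_S. unfold blend. field. apply not_0_INR. lia. }
  apply (block_ind N); [lia|]. intros a r Hr.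
  rewrite (therm2_uniform G c) by assumption. rewrite Havg, HQ, !block_eqb by assumption.
  rewrite !mix_state_block by exact Hr.
  destruct (Nat.eqb_spec a j), (Nat.eqb_spec a i); try congruence;
    destruct (Nat.eqb_spec r k), (Nat.eqb_spec r L), (Nat.ltb_spec r L), (Nat.ltb_spec r (S L)),
      (Nat.ltb_spec r k); simpl; subst; try lia; try reflexivity.
Qed.

Lemma trunc_protocol_uniform N p i j G c z : (0 < N)%nat -> i <> j ->
  (forall w, G w = c) -> c <> 0 ->
  trunc_protocol G N i j (tensor_eta N p) z = mix_state N p i j N 0 z.
Proof.
  intros HN Hij HG Hc. revert z. unfold trunc_protocol.
  apply (fold_left_seq_ind _ (fun k Q => forall z, Q z = mix_state N p i j k 0 z)).
  - intros z. symmetry. apply mix_state_init, HN.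
  - intros k Q Hk HQ z. unfold round. rewrite <- mix_state_round by exact HN. revert z.
    apply (fold_left_seq_ind _ (fun L Q' => forall z, Q' z = mix_state N p i j k L z)); [exact HQ|].
    intros L Q' HL. apply (mix_state_step N p i j G c); assumption.
Qed.

Lemma Gamma_beta0 E d N w : (0 < d)%nat -> Gamma 0 E d N w = / INR d / INR N.
Proof.
  intros Hd. unfold Gamma, gibbs.
  replace (- 0 * E (w / N)%nat) with 0 by ring.
  rewrite (rsum_ext d _ (fun _ => 1)), rsum_const, exp_0; [f_equal; field; apply not_0_INR; lia|].
  intros b _. replace (- 0 * E b) with 0 by ring. apply exp_0.
Qed.

Lemma qvec_swap d i j e p a : (a < d)%nat -> (i < d)%nat -> (j < d)%nat ->
  qvec d i j e p a = p (swap i j a) + e * (p a - p (swap i j a)).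
Proof.
  intros Ha Hi Hj. unfold qvec.
  rewrite (rsum_ext d _
    (fun b => Pi_mx i j a b * p b + e * (id_mx a b * p b - Pi_mx i j a b * p b)))
    by (intros; ring).
  rewrite rsum_add, rsum_scal, rsum_sub.
  assert (Hs : (swap i j a < d)%nat).
  { unfold swap. destruct (Nat.eqb a i); [|destruct (Nat.eqb a j)]; assumption. }
  assert (Hid : rsum d (fun b => id_mx a b * p b) = p a).
  { rewrite <- (rsum_indicator d a p Ha). apply rsum_ext. intros b _.
    unfold id_mx. rewrite Nat.eqb_sym. reflexivity. }
  unfold Pi_mx. rewrite Hid, rsum_indicator by exact Hs. ring.
Qed.

Lemma rsum_blend N p i j g :
  rsum N (fun r => blend N p i j (g r)) = (INR N * p i + (p j - p i) * rsum N g) / INR N.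
Proof.
  unfold blend. rewrite (rsum_ext N _ (fun r => p i / INR N + (p j - p i) / INR N * g r))
    by (intros; unfold Rdiv; ring).
  rewrite rsum_add, rsum_scal, rsum_const. unfold Rdiv. ring.
Qed.

Lemma protocol_beta0 E d N p i j a k : (0 < N)%nat ->
  (i < d)%nat -> (j < d)%nat -> i <> j -> (a < d)%nat -> (k < N)%nat ->
  protocol 0 E d N i j (tensor_eta N p) (a * N + k)
  = tensor_eta N (qvec d i j (fair_binom N N) p) (a * N + k).
Proof.
  intros HN Hi Hj Hij Ha Hk.
  assert (HNz : INR N <> 0) by (apply not_0_INR; lia).
  unfold protocol, therm_memory. rewrite !tensor_eta_block by exact Hk.
  apply (f_equal (fun x => x / INR N)).
  rewrite (rsum_ext N _ (fun r => mix_state N p i j N 0 (a * N + r))).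
  2:{ intros r _. apply (trunc_protocol_uniform N p i j _ (/ INR d / INR N)); auto.
      - intros w. apply Gamma_beta0. lia.
      - apply Rmult_integral_contrapositive_currified;
          apply Rinv_neq_0_compat; [apply not_0_INR; lia | exact HNz]. }
  rewrite qvec_swap by assumption. unfold swap.
  destruct (Nat.eqb_spec a i) as [->|Hai]; [|destruct (Nat.eqb_spec a j) as [->|Haj]].
  - rewrite (rsum_ext N _ (fun r => blend N p i j (race N (S r)))).
    2:{ intros r Hr. rewrite mix_state_block, Nat.eqb_refl by exact Hr. reflexivity. }
    rewrite rsum_blend, rsum_race_row. field. exact HNz.
  - rewrite (rsum_ext N _ (fun r => blend N p i j (race (S r) N))).
    2:{ intros r Hr. rewrite mix_state_block by exact Hr.
        destruct (Nat.eqb_spec j i); [congruence|]. rewrite Nat.eqb_refl.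
        destruct (Nat.ltb_spec r N); [reflexivity|lia]. }
    rewrite rsum_blend, rsum_race_col. field. exact HNz.
  - rewrite (rsum_ext N _ (fun r => p a / INR N)).
    2:{ intros r Hr. rewrite mix_state_block by exact Hr.
        destruct (Nat.eqb_spec a i), (Nat.eqb_spec a j); [congruence..|reflexivity]. }
    rewrite rsum_const. field. exact HNz.
Qed.

Definition wallis (n : nat) : R := RInt (fun x => sin x ^ n) 0 (PI / 2).

Lemma continuous_sin_pow n x : continuous (fun x => sin x ^ n) x.
Proof. apply (ex_derive_continuous (K := R_AbsRing) (V := R_NormedModule)). auto_derive. auto. Qed.

Lemma ex_RInt_sin_pow n : ex_RInt (fun x => sin x ^ n) 0 (PI / 2).
Proof.
  apply (ex_RInt_continuous (V := R_CompleteNormedModule)).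
  intros x _. apply continuous_sin_pow.
Qed.

Lemma wallis_0 : wallis 0 = PI / 2.
Proof. unfold wallis. simpl. rewrite RInt_const. unfold scal; simpl. unfold mult; simpl. lra. Qed.

Lemma wallis_1 : wallis 1 = 1.
Proof.
  unfold wallis. apply (is_RInt_unique (V := R_CompleteNormedModule)).
  replace 1 with (minus (- cos (PI / 2)) (- cos 0))
    by (rewrite cos_PI2, cos_0; unfold minus, plus, opp; simpl; lra).
  apply (is_RInt_derive (V := R_CompleteNormedModule) (fun x => - cos x)).
  - intros x _. auto_derive; [auto|ring].
  - intros x _. apply continuous_sin_pow.
Qed.

(* Integration by parts, with [cos x ^ 2 = 1 - sin x ^ 2]: the derivative of
   [cos x * sin x ^ (n + 1)] is [(n + 1) sin x ^ n - (n + 2) sin x ^ (n + 2)]. *)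
Lemma wallis_SS n : (INR n + 2) * wallis (S (S n)) = (INR n + 1) * wallis n.
Proof.
  set (f := fun x => INR (S n) * sin x ^ n - INR (S (S n)) * sin x ^ S (S n)).
  assert (Hf0 : is_RInt f 0 (PI / 2) 0).
  { replace 0 with (minus (cos (PI / 2) * sin (PI / 2) ^ S n) (cos 0 * sin 0 ^ S n)) at 2
      by (rewrite cos_PI2, sin_0; unfold minus, plus, opp; simpl; ring).
    apply (is_RInt_derive (V := R_CompleteNormedModule) (fun x => cos x * sin x ^ S n)).
    - intros x _. auto_derive; [auto|].
      pose proof (sin2_cos2 x) as Hsc. unfold Rsqr in Hsc. unfold f.
      change (match n with 0%nat => 1 | S _ => INR n + 1 end) with (INR (S n)).
      rewrite !S_INR. cbn [pow].
      replace (cos x * (1 * cos x * ((INR n + 1) * sin x ^ n)))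
        with ((INR n + 1) * sin x ^ n * (cos x * cos x)) by ring.
      replace (cos x * cos x) with (1 - sin x * sin x) by lra. ring.
    - intros x _. apply (ex_derive_continuous (K := R_AbsRing) (V := R_NormedModule)).
      unfold f. auto_derive. auto. }
  assert (Hf : is_RInt f 0 (PI / 2) (INR (S n) * wallis n - INR (S (S n)) * wallis (S (S n)))).
  { apply (is_RInt_minus (V := R_CompleteNormedModule));
      apply (is_RInt_scal (V := R_CompleteNormedModule));
      apply (RInt_correct (V := R_CompleteNormedModule));
      apply ex_RInt_sin_pow. }
  pose proof (is_RInt_unique (V := R_CompleteNormedModule) _ _ _ _ Hf0) as E0.
  rewrite (is_RInt_unique (V := R_CompleteNormedModule) _ _ _ _ Hf), !S_INR in E0. lra.
Qed.

Lemma wallis_S_le n : wallis (S n) <= wallis n.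
Proof.
  pose proof PI_RGT_0.
  unfold wallis. apply RInt_le; [lra|apply ex_RInt_sin_pow..|].
  intros x Hx.
  assert (0 <= sin x) by (apply sin_ge_0; lra).
  assert (0 <= sin x ^ n) by (apply pow_le; lra).
  pose proof (SIN_bound x). simpl. nra.
Qed.

Lemma INR_double n : INR (2 * n) = 2 * INR n.
Proof. rewrite mult_INR. simpl. ring. Qed.

Lemma wallis_even n : wallis (2 * n) = PI / 2 * fair_binom n n.
Proof.
  induction n as [|n IH]; [simpl; rewrite wallis_0, fair_binom_0_0; ring|].
  pose proof (pos_INR n). pose proof (wallis_SS (2 * n)) as Hrec.
  rewrite INR_double, IH in Hrec.
  replace (2 * S n)%nat with (S (S (2 * n))) by lia.
  apply (Rmult_eq_reg_l (2 * INR n + 2)); [|lra].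
  rewrite Hrec, fair_binom_diag_S. field. lra.
Qed.

Lemma wallis_odd n : wallis (2 * n + 1) * ((2 * INR n + 1) * fair_binom n n) = 1.
Proof.
  induction n as [|n IH]; [simpl; rewrite wallis_1, fair_binom_0_0; ring|].
  transitivity (wallis (2 * n + 1) * ((2 * INR n + 1) * fair_binom n n)); [|exact IH].
  pose proof (pos_INR n).
  pose proof (wallis_SS (2 * n + 1)) as Hrec.
  rewrite plus_INR, INR_double in Hrec. simpl INR in Hrec.
  replace (2 * S n + 1)%nat with (S (S (2 * n + 1))) by lia.
  apply (Rmult_eq_reg_l (2 * INR n + 3)); [|lra].
  transitivity ((2 * INR n + 1 + 2) * wallis (S (S (2 * n + 1)))
                 * ((2 * INR n + 3) * fair_binom (S n) (S n))); [rewrite S_INR; ring|].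
  rewrite Hrec, fair_binom_diag_S. field. lra.
Qed.

Lemma fair_binom_diag_sq_le n : PI * INR n * fair_binom n n ^ 2 <= 1.
Proof.
  destruct n as [|n]; [simpl; lra|].
  pose proof (wallis_S_le (2 * n + 1)) as Hle.
  replace (S (2 * n + 1)) with (2 * S n)%nat in Hle by lia.
  rewrite wallis_even in Hle.
  pose proof (pos_INR n). pose proof (fair_binom_pos (S n) (S n)).
  assert (Hodd : wallis (2 * n + 1) * ((2 * INR n + 2) * fair_binom (S n) (S n)) = 1).
  { rewrite <- (wallis_odd n), fair_binom_diag_S. field. lra. }
  apply (Rmult_le_compat_r ((2 * INR n + 2) * fair_binom (S n) (S n))) in Hle; [|nra].
  rewrite S_INR. lra.
Qed.

Lemma fair_binom_diag_sq_ge n : 2 <= (2 * INR n + 1) * PI * fair_binom n n ^ 2.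
Proof.
  pose proof (wallis_S_le (2 * n)) as Hle.
  replace (S (2 * n)) with (2 * n + 1)%nat in Hle by lia.
  rewrite wallis_even in Hle.
  pose proof (wallis_odd n) as Hodd. pose proof (fair_binom_pos n n). pose proof (pos_INR n).
  apply (Rmult_le_compat_r ((2 * INR n + 1) * fair_binom n n)) in Hle; [|nra].
  rewrite Hodd in Hle.
  replace ((2 * INR n + 1) * PI * fair_binom n n ^ 2)
    with (2 * (PI / 2 * fair_binom n n * ((2 * INR n + 1) * fair_binom n n))) by (simpl; field).
  lra.
Qed.

Lemma is_lim_seq_inv_INR : is_lim_seq (fun n => / INR n) 0.
Proof.
  replace (Finite 0) with (Rbar_inv p_infty) by reflexivity.
  apply is_lim_seq_inv; [apply is_lim_seq_INR|discriminate].
Qed.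

Lemma fair_binom_diag_sq_lim : is_lim_seq (fun n => PI * INR n * fair_binom n n ^ 2) 1.
Proof.
  apply (is_lim_seq_le_le_loc (fun n => 1 - / INR n) _ (fun _ => 1)).
  - exists 1%nat. intros n Hn.
    assert (Hpos : 0 < INR n) by (apply lt_0_INR; lia).
    pose proof (fair_binom_diag_sq_le n). pose proof (fair_binom_diag_sq_ge n).
    split; [|assumption].
    set (x := PI * INR n * fair_binom n n ^ 2) in *.
    assert (Hx : 2 * INR n <= (2 * INR n + 1) * x) by (unfold x; nra).
    assert (Hinv : INR n * / INR n = 1) by (field; lra).
    nra.
  - replace (Finite 1) with (Finite (1 - 0)) by (f_equal; ring).
    apply is_lim_seq_minus'; [apply is_lim_seq_const|apply is_lim_seq_inv_INR].
  - apply is_lim_seq_const.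
Qed.

Lemma sqrt_n_fair_binom_diag_lim :
  is_lim_seq (fun n => sqrt (INR n) * fair_binom n n) (1 / sqrt PI).
Proof.
  pose proof PI_RGT_0.
  apply (is_lim_seq_ext (fun n => / sqrt PI * sqrt (PI * INR n * fair_binom n n ^ 2))).
  - intros n. pose proof (fair_binom_pos n n). pose proof (pos_INR n).
    assert (0 < sqrt PI) by (apply sqrt_lt_R0; lra).
    rewrite !sqrt_mult_alt, sqrt_pow2 by first [lra | apply Rmult_le_pos; lra]. field. lra.
  - replace (1 / sqrt PI) with (/ sqrt PI * sqrt 1) by (rewrite sqrt_1; field;
      apply Rgt_not_eq, sqrt_lt_R0, PI_RGT_0).
    apply is_lim_seq_mult'; [apply is_lim_seq_const|].
    apply is_lim_seq_continuous; [apply continuity_pt_sqrt; lra|apply fair_binom_diag_sq_lim].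
Qed.

Lemma fair_binom_diag_lim_0 : is_lim_seq (fun n => fair_binom n n) 0.
Proof.
  apply (is_lim_seq_ext_loc (fun n => sqrt (INR n) * fair_binom n n * sqrt (/ INR n))).
  - exists 1%nat. intros n Hn.
    assert (0 < sqrt (INR n)) by (apply sqrt_lt_R0, lt_0_INR; lia).
    rewrite sqrt_inv. field. lra.
  - replace 0 with (1 / sqrt PI * sqrt 0) by (rewrite sqrt_0; ring).
    apply is_lim_seq_mult'; [apply sqrt_n_fair_binom_diag_lim|].
    apply is_lim_seq_continuous; [apply continuity_pt_sqrt; lra|apply is_lim_seq_inv_INR].
Qed.

Theorem lemma1 :
  exists eps : nat -> R,
    (forall (E : nat -> R) (d N : nat) (p : nat -> R) (i j : nat),
       (2 <= d)%nat -> (1 <= N)%nat -> prob_vec d p ->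
       (i < d)%nat -> (j < d)%nat -> i <> j ->
       forall a k, (a < d)%nat -> (k < N)%nat ->
         protocol 0 E d N i j (tensor_eta N p) (a * N + k)%nat
         = tensor_eta N (qvec d i j (eps N) p) (a * N + k)%nat)
    /\ Un_cv (fun N => sqrt (INR N) * eps N) (1 / sqrt PI)
    /\ Un_cv eps 0.
Proof.
  exists (fun N => fair_binom N N). split; [|split].
  - intros E d N p i j _ HN _ Hi Hj Hij a k Ha Hk.
    apply protocol_beta0; auto.
  - apply is_lim_seq_Reals, sqrt_n_fair_binom_diag_lim.
  - apply is_lim_seq_Reals, fair_binom_diag_lim_0.
Qed.
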